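(* For every $f\in\mathfrak N_0$, $(h\hat S-\hat Sh)f=-if$, and for every $f\in\mathfrak N_1$, $(h\hat S^*-\hat S^*h)f=-if$.
   Context: Work in $L^2(\mathbb{R})$; $q$ is multiplication by $x$, $p=-i\,d/dx$, $h=\frac12(p^2+q^2)$ on $D(p^2)\cap D(q^2)$. Let $\mathbb{H}=\{z:\operatorname{Im}z>0\}$, $\xi_z(x)=e^{izx^2/2}$, $\mathscr{C}(z)=\frac{z-i}{z+i}$, $\log w=\log|w|+i\arg w$ with $-\pi\le\arg w<\pi$. For $z\in\mathbb H\setminus\{i\}$ set $L_0(z)=\log(-\mathscr C(z))$ and $L_k(z)=\frac{d^{k-1}}{dz^{k-1}}\frac{2i}{1+z^2}$ for $k\ge1$. For $n\ge0$ let $[t_z^nL](x,z)=\sum_{k=0}^n\binom nkx^{2(n-k)}(-2i)^kL_k(z)$ (i.e. $(x^2-2i\,\frac{d}{dz})^n$ applied to $\log(-\mathscr C(z))$), and for a polynomial $\rho(s)=\sum c_ns^n$ let $[\rho(t_z)L]=\sum c_n[t^n_zL]$. $\mathfrak N_0$ is the span of $\{\rho(x^2)\xi_z:\rho$ polynomial, $z\in\mathbb H\setminus\{i\}\}$ and $\mathfrak N_1$ the span of $\{\rho(x^2)x\xi_z\}$ (same ranges). The linear operators $\hat S$ on $\mathfrak N_0$ and $\hat S^*$ on $\mathfrak N_1$ (notation only) are defined by $\hat S(\rho(x^2)\xi_z)=\frac i2[\rho(t_z)L](x,z)\xi_z$ and $\hat S^*(\rho(x^2)x\xi_z)=\frac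 i2[\rho(t_z)L](x,z)x\xi_z$, extended linearly. *)

From Stdlib Require Import Reals List.
From Coquelicot Require Import Coquelicot.
Import ListNotations.

Local Open Scope R_scope.

Definition Cexp' (w : C) : C :=
  (exp (fst w) * cos (snd w), exp (fst w) * sin (snd w)).

(* Principal argument with the convention -PI <= arg w < PI (w <> 0). *)
Definition carg (w : C) : R :=
  if Rlt_dec 0 (snd w) then acos (fst w / Cmod w)
  else if Rlt_dec (snd w) 0 then - acos (fst w / Cmod w)
  else if Rle_dec 0 (fst w) then 0 else - PI.

Definition clog (w : C) : C := (ln (Cmod w), carg w).

Definition cayley (z : C) : C := ((z - Ci) / (z + Ci))%C.

Definition xi (z : C) (x : R) : C := Cexp' (Ci * z * RtoC (x * x) / RtoC 2)%C.

Fixpoint Cder_n (n : nat) (f : C -> C) : C -> C :=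
  match n with
  | O => f
  | S m => C_derive (Cder_n m f)
  end.

Definition Lk (k : nat) (z : C) : C :=
  match k with
  | O => clog (- cayley z)%C
  | S m => Cder_n m (fun w => (RtoC 2 * Ci) / (RtoC 1 + w * w))%C z
  end.

Definition Csum (l : list C) : C := fold_right Cplus (RtoC 0) l.

Definition tL (n : nat) (x : R) (z : C) : C :=
  Csum (map (fun k =>
    (RtoC (Stdlib.Reals.Binomial.C n k) * RtoC (x ^ (2 * (n - k))%nat) *
     Cpow (- (RtoC 2 * Ci)) k * Lk k z)%C) (seq 0 (S n))).

Definition peval (rho : list C) (s : C) : C :=
  Csum (map (fun n => (nth n rho (RtoC 0) * Cpow s n)%C) (seq 0 (length rho))).

Definition rhotL (rho : list C) (x : R) (z : C) : C :=
  Csum (map (fun n => (nth n rho (RtoC 0) * tL n x z)%C) (seq 0 (length rho))).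

(* A representation of an element of N_0 (resp. N_1): a finite list of pairs
   (rho_j, z_j), standing for  sum_j rho_j(x^2) xi_{z_j}
   (resp. sum_j rho_j(x^2) x xi_{z_j}); complex scalars are absorbed in rho_j. *)
Definition valid_rep (r : list (list C * C)) : Prop :=
  List.Forall (fun p => 0 < snd (snd p) /\ snd p <> Ci) r.

Definition N0fun (r : list (list C * C)) (x : R) : C :=
  Csum (map (fun p => (peval (fst p) (RtoC (x * x)) * xi (snd p) x)%C) r).

Definition N1fun (r : list (list C * C)) (x : R) : C :=
  Csum (map (fun p => (peval (fst p) (RtoC (x * x)) * RtoC x * xi (snd p) x)%C) r).

Definition Shat (r : list (list C * C)) (x : R) : C :=
  Csum (map (fun p => (Ci / RtoC 2 * rhotL (fst p) x (snd p) * xi (snd p) x)%C) r).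

Definition Shatstar (r : list (list C * C)) (x : R) : C :=
  Csum (map (fun p =>
    (Ci / RtoC 2 * rhotL (fst p) x (snd p) * RtoC x * xi (snd p) x)%C) r).

Definition D2 (f : R -> C) (x : R) : C :=
  (Derive_n (fun t => fst (f t)) 2 x, Derive_n (fun t => snd (f t)) 2 x).

Definition hop (f : R -> C) (x : R) : C :=
  (RtoC (1/2) * (- D2 f x + RtoC (x * x) * f x))%C.

(* Write f as a sum of blocks x^e P(x^2) xi_z(x), with e = 0 on N_0 and e = 1 on N_1.
   Differentiating twice, h maps such a block to a block with the same z and an explicit
   polynomial, so h f has an explicit representation, and h S f - S (h f) can be compared
   block by block.  For a monomial P the comparison reduces, through the binomial structure
   of t_z^n L, to the recurrence
     (1 + z^2) L_(k+2) + 2(k+1) z L_(k+1) + k(k+1) L_k = 0,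
   the k-fold Leibniz rule applied to (1 + z^2) g' + 2 z g = 0 for g = 2i/(1+z^2).
   Since S is defined on representations, one also needs that S f depends only on f: the
   functions s^n e^(izs/2) are linearly independent on s > 0, because (d/ds - iz_0/2)^M
   kills the z_0-terms of a vanishing combination and acts injectively on the polynomial
   coefficients of the other exponentials. *)

From Stdlib Require Import Reals List Lia Lra.
From Coquelicot Require Import Coquelicot.
Import ListNotations.

Local Open Scope C_scope.

(* [ring] on [C] knows neither [Ci * Ci = -1] nor the arithmetic of [RtoC]:
   abstract the opaque complex subterms and compare real and imaginary parts. *)
Ltac split_C_atoms :=
  repeat match goal with
  | |- context [?t] =>
    let T := type of t in constr_eq T C;
    lazymatch t with
    | Cplus _ _ => fail | Cmult _ _ => fail | Copp _ => fail | Cminus _ _ => fail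
    | RtoC _ => fail | Ci => fail | (_, _) => fail
    | _ => let a := fresh "a" in let b := fresh "b" in generalize t; intros [a b]
    end
  end.
Ltac Cring := cbv beta; split_C_atoms; apply injective_projections; simpl; ring.
Ltac Cfield := cbv beta; split_C_atoms; apply injective_projections; simpl; field.

Lemma Cmult_reg_l (c w : C) : c <> 0 -> c * w = 0 -> w = 0.
Proof. intros Hc H. transitivity (/ c * (c * w)); [field; exact Hc | rewrite H; ring]. Qed.

Lemma eq_modulo (E1 E2 A B c : C) : A = B -> E1 - E2 = c * (A - B) -> E1 = E2.
Proof. intros -> H. apply Ceq_minus. rewrite H. ring. Qed.

Lemma RtoC_INR_S_neq0 n : RtoC (INR (S n)) <> 0.
Proof. intros H. apply RtoC_inj in H. pose proof (pos_INR n). rewrite S_INR in H. lra. Qed.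

Fixpoint csum (f : nat -> C) (n : nat) : C :=
  match n with O => 0 | S m => csum f m + f m end.

Lemma csum_ext (f g : nat -> C) n :
  (forall k, (k < n)%nat -> f k = g k) -> csum f n = csum g n.
Proof.
  induction n as [|n IH]; simpl; intros H; [reflexivity|].
  rewrite IH by (intros; apply H; lia). now rewrite H by lia.
Qed.

Lemma csum_eq0 (f : nat -> C) n : (forall k, (k < n)%nat -> f k = 0) -> csum f n = 0.
Proof.
  intros H. rewrite (csum_ext f (fun _ => 0)) by exact H. clear H.
  induction n as [|n IH]; simpl; [|rewrite IH]; ring.
Qed.

Lemma csum_plus (f g : nat -> C) n : csum (fun k => f k + g k) n = csum f n + csum g n.
Proof. induction n as [|n IH]; simpl; [|rewrite IH]; ring. Qed.

Lemma csum_opp (f : nat -> C) n : csum (fun k => - f k) n = - csum f n.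
Proof. induction n as [|n IH]; simpl; [|rewrite IH]; Cring. Qed.

Lemma csum_minus (f g : nat -> C) n : csum (fun k => f k - g k) n = csum f n - csum g n.
Proof. induction n as [|n IH]; simpl; [|rewrite IH]; ring. Qed.

Lemma csum_mult_l (c : C) (f : nat -> C) n : csum (fun k => c * f k) n = c * csum f n.
Proof. induction n as [|n IH]; simpl; [|rewrite IH]; ring. Qed.

Lemma csum_mult_r (f : nat -> C) n c : csum f n * c = csum (fun k => f k * c) n.
Proof. induction n as [|n IH]; simpl; [|rewrite <- IH]; ring. Qed.

Lemma csum_S (f : nat -> C) n : csum f (S n) = csum f n + f n.
Proof. reflexivity. Qed.

Lemma csum_Sn_l (f : nat -> C) n : csum f (S n) = f O + csum (fun k => f (S k)) n.
Proof.
  induction n as [|n IH]; [simpl; ring|].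
  rewrite csum_S, IH. simpl. ring.
Qed.

Lemma csum_extend (f : nat -> C) L M :
  (L <= M)%nat -> (forall n, (L <= n)%nat -> f n = 0) -> csum f M = csum f L.
Proof.
  intros HLM Hf. induction HLM as [|M HLM IH]; simpl; [reflexivity|].
  rewrite IH, Hf by lia. ring.
Qed.

Lemma Csum_nil : Csum [] = 0.
Proof. reflexivity. Qed.

Lemma Csum_cons a l : Csum (a :: l) = a + Csum l.
Proof. reflexivity. Qed.

Lemma Csum_app l1 l2 : Csum (l1 ++ l2) = Csum l1 + Csum l2.
Proof. induction l1 as [|a l1 IH]; cbn [app]; rewrite ?Csum_cons, ?IH, ?Csum_nil; ring. Qed.

Lemma Csum_map_seq (f : nat -> C) m n : Csum (map f (seq m n)) = csum (fun k => f (m + k)%nat) n.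
Proof.
  revert m. induction n as [|n IH]; intros m; [reflexivity|].
  rewrite csum_Sn_l, Nat.add_0_r. cbn [seq map]. rewrite Csum_cons, IH.
  f_equal. apply csum_ext. intros. f_equal. lia.
Qed.

Lemma Csum_flat_map {A B} (F : B -> C) (g : A -> list B) l :
  Csum (map F (flat_map g l)) = Csum (map (fun a => Csum (map F (g a))) l).
Proof. induction l as [|a l IH]; cbn [flat_map map]; [reflexivity|]. now rewrite map_app, Csum_app, IH. Qed.

Lemma Csum_map_plus {A} (F G : A -> C) l :
  Csum (map (fun a => F a + G a) l) = Csum (map F l) + Csum (map G l).
Proof. induction l as [|a l IH]; cbn [map]; rewrite ?Csum_cons, ?IH, ?Csum_nil; ring. Qed.

Lemma Csum_map_scal {A} (c : C) (F : A -> C) l :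
  Csum (map (fun a => c * F a) l) = c * Csum (map F l).
Proof. induction l as [|a l IH]; cbn [map]; rewrite ?Csum_cons, ?IH, ?Csum_nil; ring. Qed.

Lemma Csum_map_filter {A} (F : A -> C) (P : A -> bool) l :
  Csum (map F (filter P l)) = Csum (map (fun a => if P a then F a else 0) l).
Proof.
  induction l as [|a l IH]; cbn [filter map]; [reflexivity|].
  destruct (P a); cbn [map]; rewrite !Csum_cons, IH; ring.
Qed.

Lemma Csum_map_eq0 {A} (F : A -> C) l : (forall a, In a l -> F a = 0) -> Csum (map F l) = 0.
Proof.
  induction l as [|a l IH]; cbn [map In]; intros H; [reflexivity|].
  rewrite Csum_cons, H, IH by auto. ring.
Qed.

Lemma Csum_csum {A} (F : A -> nat -> C) M l :
  Csum (map (fun a => csum (F a) M) l) = csum (fun n => Csum (map (fun a => F a n) l)) M.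
Proof.
  induction l as [|a l IH]; cbn [map].
  - symmetry. now apply csum_eq0.
  - now rewrite Csum_cons, IH, <- csum_plus.
Qed.

(** * Binomial sums *)

Lemma binomial_n_0 n : Binomial.C n 0 = 1%R.
Proof. unfold Binomial.C. rewrite Nat.sub_0_r. simpl. field. apply INR_fact_neq_0. Qed.

Lemma binomial_n_n n : Binomial.C n n = 1%R.
Proof. unfold Binomial.C. rewrite Nat.sub_diag. simpl. field. apply INR_fact_neq_0. Qed.

Definition binom_sum (n : nat) (y : nat -> C) (u : R) : C :=
  csum (fun k => RtoC (Binomial.C n k) * RtoC (u ^ (n - k)) * y k) (S n).

Lemma binom_sum_ext n y y' u : (forall k, y k = y' k) -> binom_sum n y u = binom_sum n y' u.
Proof. intros H. apply csum_ext. intros. now rewrite H. Qed.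

Lemma binom_sum_plus n y y' u :
  binom_sum n (fun k => y k + y' k) u = binom_sum n y u + binom_sum n y' u.
Proof. unfold binom_sum. rewrite <- csum_plus. apply csum_ext. intros. ring. Qed.

Lemma binom_sum_scal n c y u : binom_sum n (fun k => c * y k) u = c * binom_sum n y u.
Proof. unfold binom_sum. rewrite <- csum_mult_l. apply csum_ext. intros. ring. Qed.

Lemma binom_sum_0 y u : binom_sum 0 y u = y O.
Proof. unfold binom_sum. simpl. rewrite binomial_n_0. ring. Qed.

Lemma binom_sum_delta n u : binom_sum n (fun k => if Nat.eqb k 0 then 1 else 0) u = RtoC (u ^ n).
Proof.
  unfold binom_sum. rewrite csum_Sn_l, csum_eq0 by (intros; simpl; ring).
  simpl. rewrite binomial_n_0, Nat.sub_0_r. ring.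
Qed.

Lemma binom_sum_S n y u :
  binom_sum (S n) y u = RtoC u * binom_sum n y u + binom_sum n (fun k => y (S k)) u.
Proof.
  unfold binom_sum.
  rewrite (csum_Sn_l (fun k => RtoC (Binomial.C n k) * RtoC (u ^ (n - k)) * y k) n).
  rewrite (csum_Sn_l _ (S n)), !csum_S.
  rewrite !binomial_n_0, !binomial_n_n, !Nat.sub_0_r, !Nat.sub_diag.
  assert (Pascal : forall k, (k < n)%nat ->
    RtoC (Binomial.C (S n) (S k)) * RtoC (u ^ (S n - S k)) * y (S k)
    = RtoC u * (RtoC (Binomial.C n (S k)) * RtoC (u ^ (n - S k)) * y (S k))
      + RtoC (Binomial.C n k) * RtoC (u ^ (n - k)) * y (S k)).
  { intros k Hk. rewrite <- Binomial.pascal by lia.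
    replace (S n - S k)%nat with (S (n - S k)) by lia.
    replace (n - k)%nat with (S (n - S k)) by lia.
    simpl. rewrite RtoC_plus, RtoC_mult. ring. }
  rewrite (csum_ext _ _ n Pascal), csum_plus, csum_mult_l.
  simpl. rewrite !RtoC_mult. ring.
Qed.

Lemma binom_sum_weight n y u :
  binom_sum n (fun k => RtoC (INR k) * y (pred k)) u = RtoC (INR n) * binom_sum (pred n) y u.
Proof.
  revert y. induction n as [|n IH]; intros y.
  - rewrite binom_sum_0. simpl. ring.
  - rewrite binom_sum_S, IH.
    rewrite (binom_sum_ext n _ (fun k => y k + RtoC (INR k) * y (S (pred k)))).
    2:{ intros [|k]; simpl pred; [simpl; ring | rewrite S_INR, RtoC_plus; ring]. }
    rewrite binom_sum_plus, (IH (fun j => y (S j))).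
    destruct n as [|n]; simpl pred.
    + simpl. ring.
    + rewrite (binom_sum_S n y u), !S_INR, !RtoC_plus. ring.
Qed.

(** * Derivatives of complex-valued functions of a real variable *)

Lemma is_derive_eq (f : R -> R) x l l' : is_derive f x l -> l = l' -> is_derive f x l'.
Proof. now intros H <-. Qed.

Ltac Rring_generic :=
  simpl; unfold minus, plus, opp, scal; simpl; unfold mult, one, zero; simpl;
  match goal with |- @eq _ ?a ?b => change (@eq R a b) end; ring.

Definition is_derC (f : R -> C) (x : R) (l : C) : Prop :=
  is_derive (fun t => fst (f t)) x (fst l) /\ is_derive (fun t => snd (f t)) x (snd l).

Lemma is_derC_eq f x l l' : is_derC f x l -> l = l' -> is_derC f x l'.
Proof. now intros H <-. Qed.

Lemma is_derC_ext_loc f g x l :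
  locally x (fun t => f t = g t) -> is_derC f x l -> is_derC g x l.
Proof.
  intros H [D1 D2].
  split; (eapply is_derive_ext_loc; [eapply filter_imp; [|exact H] | eassumption]);
    intros t E; cbv beta; now rewrite E.
Qed.

Lemma is_derC_ext f g x l : (forall t, f t = g t) -> is_derC f x l -> is_derC g x l.
Proof. intros H. apply is_derC_ext_loc, filter_forall, H. Qed.

Lemma is_derC_unique f x l l' : is_derC f x l -> is_derC f x l' -> l = l'.
Proof.
  intros [A1 A2] [B1 B2].
  apply injective_projections.
  - now rewrite <- (is_derive_unique _ _ _ A1), <- (is_derive_unique _ _ _ B1).
  - now rewrite <- (is_derive_unique _ _ _ A2), <- (is_derive_unique _ _ _ B2).
Qed.

Lemma is_derC_const c x : is_derC (fun _ => c) x 0.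
Proof. split; exact (is_derive_const _ x). Qed.

Lemma is_derC_RtoC f x l : is_derive f x l -> is_derC (fun t => RtoC (f t)) x (RtoC l).
Proof. intros H. split; [exact H | exact (is_derive_const _ x)]. Qed.

Lemma is_derC_plus f g x a b :
  is_derC f x a -> is_derC g x b -> is_derC (fun t => f t + g t) x (a + b).
Proof. intros [A1 A2] [B1 B2]. split; now apply @is_derive_plus. Qed.

Lemma is_derC_mult f g x a b :
  is_derC f x a -> is_derC g x b -> is_derC (fun t => f t * g t) x (a * g x + f x * b).
Proof.
  intros [A1 A2] [B1 B2]. split; simpl.
  - eapply is_derive_eq; [apply @is_derive_minus; apply @is_derive_mult; eauto using Rmult_comm|].
    Rring_generic.
  - eapply is_derive_eq; [apply @is_derive_plus; apply @is_derive_mult; eauto using Rmult_comm|].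
    Rring_generic.
Qed.

Lemma is_derC_scal c f x a : is_derC f x a -> is_derC (fun t => c * f t) x (c * a).
Proof.
  intros H. eapply is_derC_eq; [apply is_derC_mult; [apply is_derC_const | exact H]|]. cbv beta. ring.
Qed.

Lemma is_derC_id x : is_derC RtoC x 1.
Proof. apply is_derC_RtoC. exact (@is_derive_id R_AbsRing x). Qed.

Lemma is_derC_comp (F F' : R -> C) g x a :
  is_derive g x a -> is_derC F (g x) (F' (g x)) -> is_derC (fun t => F (g t)) x (RtoC a * F' (g x)).
Proof.
  intros H [D1 D2]. split; simpl.
  - eapply is_derive_eq; [apply (is_derive_comp (fun s => fst (F s))); eauto|]. Rring_generic.
  - eapply is_derive_eq; [apply (is_derive_comp (fun s => snd (F s))); eauto|]. Rring_generic.
Qed.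

Lemma is_derC_Cexp' f x a : is_derC f x a -> is_derC (fun t => Cexp' (f t)) x (a * Cexp' (f x)).
Proof.
  intros [A1 A2]. unfold Cexp'. split; simpl.
  - eapply is_derive_eq.
    { apply @is_derive_mult; [apply (is_derive_comp exp) | apply (is_derive_comp cos) | exact Rmult_comm];
        eauto using is_derive_exp, is_derive_cos. }
    Rring_generic.
  - eapply is_derive_eq.
    { apply @is_derive_mult; [apply (is_derive_comp exp) | apply (is_derive_comp sin) | exact Rmult_comm];
        eauto using is_derive_exp, is_derive_sin. }
    Rring_generic.
Qed.

Lemma is_derC_Cinv f x a :
  is_derC f x a -> f x <> 0 -> is_derC (fun t => / f t) x (- a * / (f x * f x)).
Proof.
  intros [D1 D2] Hne. destruct (f x) as [u v] eqn:Ef.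
  assert (Hn : (u * u + v * v)%R <> 0%R).
  { intros H. apply Hne. apply injective_projections; simpl; nra. }
  assert (Dn : is_derive (fun t => fst (f t) ^ 2 + snd (f t) ^ 2)%R x (2 * u * fst a + 2 * v * snd a)%R).
  { eapply is_derive_eq; [apply @is_derive_plus; apply is_derive_pow; eauto|].
    cbv beta. rewrite Ef. Rring_generic. }
  split; simpl.
  - eapply is_derive_eq; [apply is_derive_div; eauto; rewrite Ef; simpl; nra|].
    cbv beta. rewrite Ef. destruct a as [a1 a2]. simpl. field. nra.
  - eapply is_derive_eq.
    { apply is_derive_div; [apply @is_derive_opp; exact D2 | exact Dn | rewrite Ef; simpl; nra]. }
    cbv beta. rewrite Ef. destruct a as [a1 a2]. unfold opp. simpl. field. nra.
Qed.

Definition is_D2C (f g : R -> C) : Prop :=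
  exists f1, forall t, is_derC f t (f1 t) /\ is_derC f1 t (g t).

Definition ex_D2C (f : R -> C) : Prop := exists g, is_D2C f g.

Lemma D2_is_D2C f g x : is_D2C f g -> D2 f x = g x.
Proof.
  intros [f1 H]. unfold D2. simpl.
  assert (E1 : forall t, Derive (fun s => fst (f s)) t = fst (f1 t))
    by (intros t; apply is_derive_unique, (H t)).
  assert (E2 : forall t, Derive (fun s => snd (f s)) t = snd (f1 t))
    by (intros t; apply is_derive_unique, (H t)).
  rewrite (Derive_ext (fun t => Derive _ t) _ x E1), (Derive_ext (fun t => Derive _ t) _ x E2).
  apply injective_projections; apply is_derive_unique, (H x).
Qed.

Lemma hop_is_D2C f g x : is_D2C f g -> hop f x = RtoC (1/2) * (- g x + RtoC (x * x) * f x).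
Proof. intros H. unfold hop. now rewrite (D2_is_D2C f g x H). Qed.

Lemma hop_ext f g x : (forall t, f t = g t) -> hop f x = hop g x.
Proof.
  intros H. unfold hop, D2.
  rewrite (Derive_n_ext (fun t => fst (f t)) (fun t => fst (g t))) by (intros; now rewrite H).
  rewrite (Derive_n_ext (fun t => snd (f t)) (fun t => snd (g t))) by (intros; now rewrite H).
  now rewrite H.
Qed.

Lemma is_D2C_ext f g f' g' :
  (forall t, f t = f' t) -> (forall t, g t = g' t) -> is_D2C f g -> is_D2C f' g'.
Proof.
  intros Ef Eg [f1 H]. exists f1. intros t. destruct (H t) as [D1 D2].
  split; [now apply (is_derC_ext f) | now rewrite <- Eg].
Qed.

Lemma is_D2C_const c : is_D2C (fun _ => c) (fun _ => 0).
Proof. exists (fun _ => 0). split; apply is_derC_const. Qed.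

Lemma is_D2C_plus f g f' g' :
  is_D2C f g -> is_D2C f' g' -> is_D2C (fun t => f t + f' t) (fun t => g t + g' t).
Proof.
  intros [f1 H] [f1' H']. exists (fun t => f1 t + f1' t). intros t.
  destruct (H t), (H' t). split; now apply is_derC_plus.
Qed.

Lemma is_D2C_scal c f g : is_D2C f g -> is_D2C (fun t => c * f t) (fun t => c * g t).
Proof.
  intros [f1 H]. exists (fun t => c * f1 t). intros t.
  destruct (H t). split; now apply is_derC_scal.
Qed.

Lemma ex_D2C_plus f g : ex_D2C f -> ex_D2C g -> ex_D2C (fun t => f t + g t).
Proof. intros [f2 H] [g2 H']. eexists. exact (is_D2C_plus _ _ _ _ H H'). Qed.

Lemma ex_D2C_scal c f : ex_D2C f -> ex_D2C (fun t => c * f t).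
Proof. intros [f2 H]. eexists. exact (is_D2C_scal c _ _ H). Qed.

Lemma hop_const c x : hop (fun _ => c) x = RtoC (1/2) * RtoC (x * x) * c.
Proof. rewrite (hop_is_D2C _ _ x (is_D2C_const c)). Cring. Qed.

Lemma hop_plus f g x : ex_D2C f -> ex_D2C g -> hop (fun t => f t + g t) x = hop f x + hop g x.
Proof.
  intros [f2 H] [g2 H'].
  rewrite (hop_is_D2C _ _ x (is_D2C_plus _ _ _ _ H H')), (hop_is_D2C _ _ x H), (hop_is_D2C _ _ x H').
  ring.
Qed.

Lemma hop_scal c f x : ex_D2C f -> hop (fun t => c * f t) x = c * hop f x.
Proof.
  intros [f2 H]. rewrite (hop_is_D2C _ _ x (is_D2C_scal c _ _ H)), (hop_is_D2C _ _ x H). ring.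
Qed.

Lemma ex_D2C_csum (F : nat -> R -> C) N :
  (forall n, ex_D2C (F n)) -> ex_D2C (fun x => csum (fun n => F n x) N).
Proof.
  intros H. induction N as [|N IH]; simpl.
  - eexists. apply is_D2C_const.
  - now apply ex_D2C_plus.
Qed.

Lemma hop_csum (F : nat -> R -> C) N x :
  (forall n, ex_D2C (F n)) -> hop (fun x => csum (fun n => F n x) N) x = csum (fun n => hop (F n) x) N.
Proof.
  intros H. induction N as [|N IH]; simpl.
  - rewrite hop_const. ring.
  - rewrite hop_plus; [now rewrite IH | now apply ex_D2C_csum | apply H].
Qed.

Lemma ex_D2C_Csum {A} (F : A -> R -> C) l :
  (forall a, ex_D2C (F a)) -> ex_D2C (fun x => Csum (map (fun a => F a x) l)).
Proof.
  intros H. induction l as [|a l IH]; simpl.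
  - eexists. apply is_D2C_const.
  - now apply ex_D2C_plus.
Qed.

Lemma hop_Csum {A} (F : A -> R -> C) l x :
  (forall a, ex_D2C (F a)) ->
  hop (fun x => Csum (map (fun a => F a x) l)) x = Csum (map (fun a => hop (F a) x) l).
Proof.
  intros H. induction l as [|a l IH]; simpl.
  - rewrite hop_const. Cring.
  - rewrite hop_plus; [now rewrite IH | apply H | now apply ex_D2C_Csum].
Qed.

(** * The recurrence satisfied by the L_k *)

Lemma Lim_difference_quotient (f g : R -> R) x0 l :
  is_derive f x0 l -> (forall y, y <> x0 -> g y = (f y - f x0) / (y - x0))%R -> real (Lim g x0) = l.
Proof.
  intros Df Eg. apply is_derive_Reals in Df.
  replace l with (real (Finite l)) by reflexivity. f_equal. apply is_lim_unique, is_lim_spec.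
  intros eps. destruct (Df eps (cond_pos eps)) as [delta Hd].
  exists delta. intros y Hy Hne. change R in y.
  change (Rabs (y - x0) < delta) in Hy.
  rewrite Eg by exact Hne. specialize (Hd (y - x0)%R).
  replace (x0 + (y - x0))%R with y in Hd by ring. apply Hd; [lra | exact Hy].
Qed.

(* [C_derive] only looks along the horizontal line through the point. *)
Lemma C_derive_horizontal (F : C -> C) x0 y0 l :
  is_derC (fun t => F (t, y0)) x0 l -> C_derive F (x0, y0) = l.
Proof.
  intros [D1 D2]. unfold C_derive, C_lim. simpl fst; simpl snd.
  apply injective_projections; simpl.
  - apply (Lim_difference_quotient (fun t => fst (F (t, y0)))); [exact D1|].
    intros y Hy. simpl. field. split; [lra | nra].
  - apply (Lim_difference_quotient (fun t => snd (F (t, y0)))); [exact D2|].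
    intros y Hy. simpl. field. split; [lra | nra].
Qed.

Lemma locally_neq (x a : R) : x <> a -> locally x (fun t => t <> a).
Proof.
  intros H. assert (Hd : 0 < Rabs (x - a)) by (apply Rabs_pos_lt; lra).
  exists (mkposreal _ Hd). intros t Ht ->.
  change (Rabs (a - x) < Rabs (x - a)) in Ht. rewrite Rabs_minus_sym in Ht. lra.
Qed.

Definition dlog_cayley (w : C) : C := (RtoC 2 * Ci) / (RtoC 1 + w * w).

Section HorizontalLine.

Variable y0 : R.

Let pt (x : R) : C := (x, y0).
Let der (m : nat) (x : R) : C := Cder_n m dlog_cayley (pt x).
Let one_plus_sq (x : R) : C := RtoC 1 + pt x * pt x.
Let regular (x : R) : Prop := one_plus_sq x <> 0.

Lemma regular_iff x : regular x <-> x <> 0%R \/ (y0 * y0 <> 1)%R.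
Proof.
  unfold regular, one_plus_sq, pt. split.
  - intros H. destruct (Req_dec x 0) as [->|Hx]; [right|left; exact Hx].
    intros E. apply H. apply injective_projections; simpl; nra.
  - intros H E. injection E as E1 E2. destruct H as [H|H].
    + apply H. nra.
    + assert (x = 0%R \/ y0 = 0%R) as [->| ->] by (apply Rmult_integral; nra); nra.
Qed.

Lemma regular_locally x : regular x -> locally x regular.
Proof.
  intros H. apply regular_iff in H. destruct (Req_dec (y0 * y0) 1) as [E|E].
  - destruct H as [H|H]; [|contradiction].
    apply (filter_imp (fun t => t <> 0%R)); [intros t Ht; apply regular_iff; now left|].
    now apply locally_neq.
  - apply filter_forall. intros t. apply regular_iff. now right.
Qed.

Lemma is_derC_pt x : is_derC pt x 1.
Proof. split; [exact (@is_derive_id R_AbsRing x) | exact (is_derive_const _ x)]. Qed.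

Lemma der_S m x l : is_derC (der m) x l -> der (S m) x = l.
Proof. apply C_derive_horizontal. Qed.

Lemma is_derC_one_plus_sq x : is_derC one_plus_sq x (RtoC 2 * pt x).
Proof.
  eapply is_derC_eq; [apply is_derC_plus; [apply is_derC_const | apply is_derC_mult; apply is_derC_pt]|].
  Cring.
Qed.

(* Leibniz rule applied m times to (1 + w^2) g'(w) + 2 w g(w) = 0. *)
Definition der_rel (m : nat) (x : R) : Prop :=
  one_plus_sq x * der (S m) x + RtoC (2 * INR (S m)) * pt x * der m x
  + RtoC (INR (S m) * INR m) * der (pred m) x = 0.

Definition der_step (m : nat) : Prop :=
  forall x, regular x -> is_derC (der m) x (der (S m) x) /\ der_rel m x.

Lemma der_step_0 : der_step 0.
Proof.
  intros x Hx.
  assert (D : is_derC (der 0) x (RtoC 2 * Ci * (- (RtoC 2 * pt x) * / (one_plus_sq x * one_plus_sq x)))).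
  { apply (is_derC_ext (fun t => RtoC 2 * Ci * / one_plus_sq t)); [reflexivity|].
    apply is_derC_scal, is_derC_Cinv; [apply is_derC_one_plus_sq | exact Hx]. }
  split; [now rewrite (der_S 0 x _ D)|].
  unfold der_rel. rewrite (der_S 0 x _ D).
  unfold der, Cder_n, dlog_cayley, one_plus_sq. simpl pred. simpl INR.
  unfold Cdiv. rewrite !RtoC_mult. field. exact Hx.
Qed.

Section Step.

Variable m : nat.
Hypotheses (Hm : der_step m) (Hpm : der_step (pred m)).

Let c1 := RtoC (2 * INR (S m)).
Let c2 := RtoC (INR (S m) * INR m).

Lemma is_derC_der_S x : regular x -> is_derC (der (S m)) x (der (S (S m)) x).
Proof.
  intros Hx.
  (* Near x, der_rel m expresses der (S m) through der m and der (pred m). *)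
  set (F t := - ((c1 * pt t * der m t + c2 * der (pred m) t) * / one_plus_sq t)).
  assert (EF : forall t, regular t -> F t = der (S m) t).
  { intros t Ht. destruct (Hm t Ht) as [_ Rt]. unfold der_rel in Rt. fold c1 c2 in Rt.
    unfold F. replace (c1 * pt t * der m t + c2 * der (pred m) t) with (- (one_plus_sq t * der (S m) t)).
    - field. exact Ht.
    - rewrite <- (Cplus_0_l (- _)), <- Rt. ring. }
  destruct (Hm x Hx) as [Dm _], (Hpm x Hx) as [Dp _].
  assert (DF : exists dF, is_derC F x dF).
  { eexists. apply (is_derC_ext (fun t => - RtoC 1 * ((c1 * pt t * der m t + c2 * der (pred m) t)
                                                      * / one_plus_sq t))); [intros; unfold F; ring|].
    apply is_derC_scal, is_derC_mult.
    - apply is_derC_plus; [apply is_derC_mult; [apply is_derC_scal, is_derC_pt | exact Dm]|].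
      apply is_derC_scal, Dp.
    - apply is_derC_Cinv; [apply is_derC_one_plus_sq | exact Hx]. }
  destruct DF as [dF DF].
  assert (DS : is_derC (der (S m)) x dF).
  { eapply is_derC_ext_loc; [|exact DF].
    apply (filter_imp regular); [exact EF | now apply regular_locally]. }
  now rewrite (der_S (S m) x dF DS).
Qed.

Lemma der_rel_S x : regular x -> der_rel (S m) x.
Proof.
  intros Hx.
  pose proof (is_derC_der_S x Hx) as DS.
  destruct (Hm x Hx) as [Dm _], (Hpm x Hx) as [Dp _].
  set (G t := one_plus_sq t * der (S m) t + c1 * pt t * der m t + c2 * der (pred m) t).
  assert (DG : is_derC G x
    (RtoC 2 * pt x * der (S m) x + one_plus_sq x * der (S (S m)) x
     + (c1 * der m x + c1 * pt x * der (S m) x) + c2 * der (S (pred m)) x)).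
  { eapply is_derC_eq.
    { apply is_derC_plus; [apply is_derC_plus|].
      - apply is_derC_mult; [apply is_derC_one_plus_sq | exact DS].
      - apply is_derC_mult; [apply is_derC_scal, is_derC_pt | exact Dm].
      - apply is_derC_scal, Dp. }
    cbv beta. ring. }
  assert (DG0 : is_derC G x 0).
  { eapply is_derC_ext_loc; [|apply (is_derC_const 0)].
    apply (filter_imp regular); [|now apply regular_locally].
    intros t Ht. destruct (Hm t Ht) as [_ Rt]. exact (eq_sym Rt). }
  pose proof (is_derC_unique _ _ _ _ DG DG0) as Z.
  unfold der_rel. rewrite <- Z. unfold c1, c2.
  destruct m as [|j]; simpl pred; rewrite ?S_INR, !RtoC_mult, ?RtoC_plus; simpl INR; ring.
Qed.

End Step.

Lemma der_step_all m : der_step m.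
Proof.
  assert (H : der_step m /\ der_step (pred m)).
  { induction m as [|m [IH IHp]]; [split; apply der_step_0|].
    split; [|exact IH]. intros x Hx. split; [now apply is_derC_der_S | now apply der_rel_S]. }
  apply H.
Qed.

End HorizontalLine.

Lemma Lk_1 z : RtoC 1 + z * z <> 0 -> (RtoC 1 + z * z) * Lk 1 z = RtoC 2 * Ci.
Proof. intros H. simpl. unfold Cdiv. field. exact H. Qed.

Lemma Lk_rec z m : RtoC 1 + z * z <> 0 ->
  (RtoC 1 + z * z) * Lk (S (S m)) z + RtoC (2 * INR (S m)) * z * Lk (S m) z
  + RtoC (INR (S m) * INR m) * Lk (S (pred m)) z = 0.
Proof. intros H. destruct z as [x y0]. exact (proj2 (der_step_all y0 m x H)). Qed.

Definition Lseq (z : C) (k : nat) : C := Cpow (- (RtoC 2 * Ci)) k * Lk k z.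

Lemma tL_binom_sum n x z : tL n x z = binom_sum n (Lseq z) (x * x).
Proof.
  unfold tL, binom_sum. rewrite Csum_map_seq. apply csum_ext. intros k Hk. cbn [Nat.add].
  rewrite pow_mult. replace (x ^ 2)%R with (x * x)%R by ring. unfold Lseq. ring.
Qed.

Lemma Lseq_rec z k : RtoC 1 + z * z <> 0 ->
  (RtoC 1 + z * z) * Lseq z (S k)
  = RtoC 4 * (if Nat.eqb k 0 then 1 else 0)
    + RtoC 4 * Ci * z * (RtoC (INR k) * Lseq z (S (pred k)))
    + RtoC 4 * (RtoC (INR k) * (RtoC (INR (pred k)) * Lseq z (S (pred (pred k))))).
Proof.
  intros H. unfold Lseq. destruct k as [|j].
  - transitivity (Cpow (- (RtoC 2 * Ci)) 1 * ((RtoC 1 + z * z) * Lk 1 z)); [ring|].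
    rewrite Lk_1 by exact H. simpl. Cring.
  - assert (E : (RtoC 1 + z * z) * Lk (S (S j)) z
      = - (RtoC (2 * INR (S j)) * z * Lk (S j) z + RtoC (INR (S j) * INR j) * Lk (S (pred j)) z)).
    { rewrite <- (Cplus_0_l (- _)), <- (Lk_rec z j H). ring. }
    transitivity (Cpow (- (RtoC 2 * Ci)) (S (S j)) * ((RtoC 1 + z * z) * Lk (S (S j)) z)); [ring|].
    rewrite E. simpl Nat.eqb. destruct j as [|i]; simpl pred; simpl Cpow.
    + simpl INR. Cring.
    + rewrite !S_INR. Cring.
Qed.

Lemma binom_sum_Lseq_rec z n u : RtoC 1 + z * z <> 0 ->
  (RtoC 1 + z * z) * binom_sum n (fun k => Lseq z (S k)) u
  = RtoC 4 * RtoC (u ^ n)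
    + RtoC 4 * Ci * z * (RtoC (INR n) * binom_sum (pred n) (fun k => Lseq z (S k)) u)
    + RtoC 4 * (RtoC (INR n) * (RtoC (INR (pred n)) * binom_sum (pred (pred n)) (fun k => Lseq z (S k)) u)).
Proof.
  intros H. set (Y k := Lseq z (S k)).
  rewrite <- binom_sum_scal.
  rewrite (binom_sum_ext n _ (fun k => (RtoC 4 * (if Nat.eqb k 0 then 1 else 0)
      + RtoC 4 * Ci * z * (RtoC (INR k) * Y (pred k)))
      + RtoC 4 * (RtoC (INR k) * (fun j => RtoC (INR j) * Y (pred j)) (pred k))))
    by (intros k; exact (Lseq_rec z k H)).
  rewrite !binom_sum_plus, !binom_sum_scal, binom_sum_delta, (binom_sum_weight n Y),
    (binom_sum_weight n (fun j => RtoC (INR j) * Y (pred j))), (binom_sum_weight (pred n) Y).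
  reflexivity.
Qed.

(** * The operator h on blocks x^e P(x^2) xi_z(x) *)

Lemma is_derive_sqr x : is_derive (fun t => t * t)%R x (2 * x)%R.
Proof.
  pose proof (@is_derive_id R_AbsRing x) as Id.
  eapply is_derive_eq; [apply (@is_derive_mult R_AbsRing (fun t => t) (fun t => t));
    [exact Id | exact Id | exact Rmult_comm]|].
  Rring_generic.
Qed.

Lemma is_derC_xi z x : is_derC (xi z) x (Ci * z * RtoC x * xi z x).
Proof.
  unfold xi. eapply is_derC_eq.
  - apply is_derC_Cexp'.
    apply (is_derC_ext (fun t => (Ci * z / RtoC 2) * RtoC (t * t))); [intros; unfold Cdiv; ring|].
    apply is_derC_scal, is_derC_RtoC, is_derive_sqr.
  - unfold Cdiv. rewrite <- RtoC_inv by lra. Cfield.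
Qed.

Lemma is_derC_comp_sqr (Q Q1 : R -> C) x :
  (forall u, is_derC Q u (Q1 u)) -> is_derC (fun t => Q (t * t)%R) x (RtoC 2 * RtoC x * Q1 (x * x)%R).
Proof.
  intros HQ. eapply is_derC_eq; [apply is_derC_comp; [apply is_derive_sqr | apply HQ]|].
  rewrite RtoC_mult. ring.
Qed.

Section Block.

Variables (P P1 P2 : R -> C) (z : C).
Hypotheses (HP : forall u, is_derC P u (P1 u)) (HP1 : forall u, is_derC P1 u (P2 u)).

Definition block_D2_coef (e : nat) (x : R) : C :=
  RtoC (2 + 4 * INR e) * P1 (x * x) + RtoC 4 * RtoC (x * x) * P2 (x * x)
  + Ci * z * RtoC (1 + 2 * INR e) * P (x * x) + RtoC 4 * Ci * z * RtoC (x * x) * P1 (x * x)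
  + (Ci * z) * (Ci * z) * RtoC (x * x) * P (x * x).

Lemma is_D2C_block_even :
  is_D2C (fun x => P (x * x) * xi z x) (fun x => block_D2_coef 0 x * xi z x).
Proof.
  exists (fun t => (RtoC 2 * RtoC t * P1 (t * t) + Ci * z * RtoC t * P (t * t)) * xi z t).
  intros t. split.
  - eapply is_derC_eq; [apply is_derC_mult; [apply is_derC_comp_sqr, HP | apply is_derC_xi]|]. Cring.
  - eapply is_derC_eq.
    { apply is_derC_mult; [apply is_derC_plus | apply is_derC_xi];
        apply is_derC_mult; [apply is_derC_scal, is_derC_id | | apply is_derC_scal, is_derC_id | ];
        now apply is_derC_comp_sqr. }
    unfold block_D2_coef. simpl INR. Cring.
Qed.

Lemma is_D2C_block_odd :
  is_D2C (fun x => RtoC x * P (x * x) * xi z x) (fun x => RtoC x * block_D2_coef 1 x * xi z x).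
Proof.
  exists (fun t => (P (t * t) + RtoC 2 * RtoC (t * t) * P1 (t * t)
                    + Ci * z * RtoC (t * t) * P (t * t)) * xi z t).
  intros t. split.
  - eapply is_derC_eq.
    { apply is_derC_mult; [|apply is_derC_xi].
      apply is_derC_mult; [apply is_derC_id | apply is_derC_comp_sqr, HP]. }
    Cring.
  - eapply is_derC_eq.
    { pose proof (fun t => is_derC_RtoC _ t _ (is_derive_sqr t)) as Dsqr.
      apply is_derC_mult; [apply is_derC_plus; [apply is_derC_plus|] | apply is_derC_xi].
      - now apply is_derC_comp_sqr.
      - apply is_derC_mult; [apply is_derC_scal, Dsqr | now apply is_derC_comp_sqr].
      - apply is_derC_mult; [apply is_derC_scal, Dsqr | now apply is_derC_comp_sqr]. }
    unfold block_D2_coef. simpl INR. Cring.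
Qed.

Lemma is_D2C_block e : (e <= 1)%nat ->
  is_D2C (fun x => RtoC (x ^ e) * P (x * x) * xi z x) (fun x => RtoC (x ^ e) * block_D2_coef e x * xi z x).
Proof.
  intros He. destruct e as [|[|e]]; [| |lia].
  - eapply is_D2C_ext; [| |exact is_D2C_block_even]; intros; simpl; ring.
  - eapply is_D2C_ext; [| |exact is_D2C_block_odd]; intros; simpl; rewrite Rmult_1_r; ring.
Qed.

Lemma hop_block e x : (e <= 1)%nat ->
  hop (fun x => RtoC (x ^ e) * P (x * x) * xi z x) x
  = RtoC (x ^ e) * xi z x * (RtoC (1/2) * (- block_D2_coef e x + RtoC (x * x) * P (x * x))).
Proof. intros He. rewrite (hop_is_D2C _ _ x (is_D2C_block e He)). ring. Qed.

End Block.

Definition hop_pattern (e : nat) (z : C) (m : nat) (F : nat -> C) : C :=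
  RtoC (1/2) * (RtoC 1 + z * z) * F (S m)
  - RtoC (1/2) * Ci * z * RtoC (1 + 2 * INR e + 4 * INR m) * F m
  - RtoC (INR m * (2 * INR m - 1 + 2 * INR e)) * F (pred m).

Lemma is_derC_pow m v : is_derC (fun u => RtoC (u ^ m)) v (RtoC (INR m) * RtoC (v ^ pred m)).
Proof.
  eapply is_derC_eq; [apply is_derC_RtoC, (is_derive_pow (fun t => t)), (@is_derive_id R_AbsRing v)|].
  rewrite <- RtoC_mult. f_equal. Rring_generic.
Qed.

Lemma is_derC_pow_scal m v :
  is_derC (fun u => RtoC (INR m) * RtoC (u ^ pred m)) v
          (RtoC (INR m) * (RtoC (INR (pred m)) * RtoC (v ^ pred (pred m)))).
Proof. apply is_derC_scal, is_derC_pow. Qed.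

Lemma hop_monomial e z m x : (e <= 1)%nat ->
  hop (fun x => RtoC (x ^ e) * RtoC ((x * x) ^ m) * xi z x) x
  = RtoC (x ^ e) * xi z x * hop_pattern e z m (fun k => RtoC ((x * x) ^ k)).
Proof.
  intros He.
  rewrite (hop_block _ _ _ z (is_derC_pow m) (is_derC_pow_scal m) e x He).
  unfold block_D2_coef, hop_pattern. destruct m as [|[|j]]; simpl pred.
  - simpl INR. Cfield.
  - simpl INR. Cfield.
  - rewrite !S_INR. Cfield.
Qed.

Lemma is_derC_binom_sum n y u :
  is_derC (binom_sum n y) u (RtoC (INR n) * binom_sum (pred n) y u).
Proof.
  revert y. induction n as [|n IH]; intros y.
  - apply (is_derC_ext (fun _ => y O)); [intros; now rewrite binom_sum_0|].
    eapply is_derC_eq; [apply is_derC_const|]. simpl. ring.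
  - apply (is_derC_ext (fun t => RtoC t * binom_sum n y t + binom_sum n (fun k => y (S k)) t));
      [intros; now rewrite binom_sum_S|].
    eapply is_derC_eq; [apply is_derC_plus; [apply is_derC_mult; [apply is_derC_id | apply IH] | apply IH]|].
    destruct n as [|n]; simpl pred.
    + rewrite !binom_sum_0. simpl. ring.
    + rewrite (binom_sum_S n y u), !S_INR, !RtoC_plus. ring.
Qed.

Lemma is_derC_binom_sum_scal n y u :
  is_derC (fun v => RtoC (INR n) * binom_sum (pred n) y v) u
          (RtoC (INR n) * (RtoC (INR (pred n)) * binom_sum (pred (pred n)) y u)).
Proof. apply is_derC_scal, is_derC_binom_sum. Qed.

Lemma hop_tL_commutator e z n x : (e <= 1)%nat -> RtoC 1 + z * z <> 0 ->
  hop (fun x => RtoC (x ^ e) * tL n x z * xi z x) x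
  - RtoC (x ^ e) * xi z x * hop_pattern e z n (fun k => tL k x z)
  = - RtoC 2 * (RtoC (x ^ e) * RtoC ((x * x) ^ n) * xi z x).
Proof.
  intros He Hz.
  rewrite (hop_ext _ (fun x => RtoC (x ^ e) * binom_sum n (Lseq z) (x * x) * xi z x))
    by (intros; now rewrite tL_binom_sum).
  rewrite (hop_block _ _ _ z (is_derC_binom_sum n _) (is_derC_binom_sum_scal n _) e x He).
  unfold hop_pattern, block_D2_coef. rewrite !tL_binom_sum.
  set (u := (x * x)%R).
  (* The identity holds modulo the recurrence for the binomial sums of the L_(k+1). *)
  apply (eq_modulo _ _ _ _ (- (RtoC (1/2) * RtoC (x ^ e) * xi z x)) (binom_sum_Lseq_rec z n u Hz)).
  rewrite (binom_sum_S n (Lseq z) u).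
  destruct n as [|[|j]]; simpl pred.
  - rewrite !binom_sum_0. simpl INR. Cfield.
  - rewrite (binom_sum_S 0 (Lseq z) u), !binom_sum_0. simpl INR. Cfield.
  - rewrite (binom_sum_S (S j) (Lseq z) u), (binom_sum_S j (Lseq z) u), !S_INR. Cfield.
Qed.

(** * Representations of elements of N_0 and N_1 *)

Definition lincomb (rho : list C) (F : nat -> C) : C :=
  Csum (map (fun n => nth n rho 0 * F n) (seq 0 (length rho))).

Lemma lincomb_csum rho F : lincomb rho F = csum (fun n => nth n rho 0 * F n) (length rho).
Proof. apply Csum_map_seq. Qed.

Lemma peval_lincomb rho s : peval rho s = lincomb rho (Cpow s).
Proof. reflexivity. Qed.

Lemma rhotL_lincomb rho x z : rhotL rho x z = lincomb rho (fun n => tL n x z).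
Proof. reflexivity. Qed.

Definition monomial (a : C) (m : nat) : list C := repeat (RtoC 0) m ++ [a].

Lemma lincomb_monomial a m F : lincomb (monomial a m) F = a * F m.
Proof.
  rewrite lincomb_csum. unfold monomial. rewrite length_app, repeat_length, Nat.add_1_r, csum_S.
  rewrite csum_eq0.
  - rewrite app_nth2, repeat_length, Nat.sub_diag by (rewrite repeat_length; lia). simpl. ring.
  - intros k Hk. rewrite app_nth1, nth_repeat by (rewrite repeat_length; lia). ring.
Qed.

Lemma lincomb_opp rho F : lincomb (map Copp rho) F = - lincomb rho F.
Proof.
  rewrite !lincomb_csum, length_map, <- csum_opp. apply csum_ext. intros n Hn.
  rewrite (nth_indep _ _ (Copp 0)) by (rewrite length_map; exact Hn).
  rewrite map_nth. ring.
Qed.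

Lemma hop_pattern_scal e z m c F :
  hop_pattern e z m (fun k => c * F k) = c * hop_pattern e z m F.
Proof. unfold hop_pattern. ring. Qed.

Section Parity.

(* e = 0 describes N_0 and S-hat, e = 1 describes N_1 and S-hat-star. *)
Variable e : nat.

Definition Nterm (p : list C * C) (x : R) : C :=
  peval (fst p) (RtoC (x * x)) * RtoC (x ^ e) * xi (snd p) x.

Definition Sterm (p : list C * C) (x : R) : C :=
  Ci / RtoC 2 * rhotL (fst p) x (snd p) * RtoC (x ^ e) * xi (snd p) x.

Definition Nfun (r : list (list C * C)) (x : R) : C := Csum (map (fun p => Nterm p x) r).

Definition Sfun (r : list (list C * C)) (x : R) : C := Csum (map (fun p => Sterm p x) r).

Definition Nblock (z : C) (n : nat) (x : R) : C := RtoC (x ^ e) * RtoC ((x * x) ^ n) * xi z x.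

Definition Sblock (z : C) (n : nat) (x : R) : C := Ci / RtoC 2 * (RtoC (x ^ e) * tL n x z * xi z x).

Lemma Nterm_csum p x :
  Nterm p x = csum (fun n => nth n (fst p) 0 * Nblock (snd p) n x) (length (fst p)).
Proof.
  unfold Nterm. rewrite peval_lincomb, lincomb_csum, !csum_mult_r.
  apply csum_ext. intros. unfold Nblock. rewrite <- RtoC_pow. ring.
Qed.

Lemma Sterm_csum p x :
  Sterm p x = csum (fun n => nth n (fst p) 0 * Sblock (snd p) n x) (length (fst p)).
Proof.
  unfold Sterm. rewrite rhotL_lincomb, lincomb_csum, <- csum_mult_l, !csum_mult_r.
  apply csum_ext. intros. unfold Sblock. ring.
Qed.

Lemma Nterm_monomial a m z x : Nterm (monomial a m, z) x = a * Nblock z m x.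
Proof. unfold Nterm, Nblock. simpl. rewrite peval_lincomb, lincomb_monomial, <- RtoC_pow. ring. Qed.

Lemma Sterm_monomial a m z x : Sterm (monomial a m, z) x = a * Sblock z m x.
Proof. unfold Sterm, Sblock. simpl. rewrite rhotL_lincomb, lincomb_monomial. ring. Qed.

Hypothesis He : (e <= 1)%nat.

Lemma ex_D2C_Nblock z n : ex_D2C (Nblock z n).
Proof. eexists. exact (is_D2C_block _ _ _ z (is_derC_pow n) (is_derC_pow_scal n) e He). Qed.

Lemma ex_D2C_tL_block z n : ex_D2C (fun x => RtoC (x ^ e) * tL n x z * xi z x).
Proof.
  eexists. eapply is_D2C_ext; [| |exact (is_D2C_block _ _ _ z
    (is_derC_binom_sum n (Lseq z)) (is_derC_binom_sum_scal n (Lseq z)) e He)].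
  - intros. now rewrite tL_binom_sum.
  - reflexivity.
Qed.

Lemma ex_D2C_Sblock z n : ex_D2C (Sblock z n).
Proof. apply ex_D2C_scal, ex_D2C_tL_block. Qed.

Lemma ex_D2C_Nterm p : ex_D2C (Nterm p).
Proof.
  destruct (ex_D2C_csum (fun n x => nth n (fst p) 0 * Nblock (snd p) n x) (length (fst p)))
    as [g Hg]; [intros; apply ex_D2C_scal, ex_D2C_Nblock|].
  exists g. eapply is_D2C_ext; [| |exact Hg]; [intros; symmetry; apply Nterm_csum | reflexivity].
Qed.

Lemma ex_D2C_Sterm p : ex_D2C (Sterm p).
Proof.
  destruct (ex_D2C_csum (fun n x => nth n (fst p) 0 * Sblock (snd p) n x) (length (fst p)))
    as [g Hg]; [intros; apply ex_D2C_scal, ex_D2C_Sblock|].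
  exists g. eapply is_D2C_ext; [| |exact Hg]; [intros; symmetry; apply Sterm_csum | reflexivity].
Qed.

Lemma hop_Nblock z m x : hop (Nblock z m) x = hop_pattern e z m (fun k => Nblock z k x).
Proof.
  unfold Nblock. rewrite hop_monomial by exact He.
  rewrite <- hop_pattern_scal. unfold hop_pattern. ring.
Qed.

Lemma hop_Sblock_commutator z m x : RtoC 1 + z * z <> 0 ->
  hop (Sblock z m) x - hop_pattern e z m (fun k => Sblock z k x) = - Ci * Nblock z m x.
Proof.
  intros Hz. unfold Sblock. rewrite hop_scal by apply ex_D2C_tL_block.
  apply (eq_modulo _ _ _ _ (Ci / RtoC 2) (hop_tL_commutator e z m x He Hz)).
  unfold hop_pattern, Nblock, Cdiv. rewrite <- RtoC_inv by lra. Cfield.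
Qed.

End Parity.

Section HopRepresentation.

Variable e : nat.

Definition hop_rep_block (z c : C) (m : nat) : list (list C * C) :=
  [(monomial (c * (RtoC (1/2) * (RtoC 1 + z * z))) (S m), z);
   (monomial (c * - (RtoC (1/2) * Ci * z * RtoC (1 + 2 * INR e + 4 * INR m))) m, z);
   (monomial (c * - RtoC (INR m * (2 * INR m - 1 + 2 * INR e))) (pred m), z)].

Definition hop_rep_term (p : list C * C) : list (list C * C) :=
  flat_map (fun n => hop_rep_block (snd p) (nth n (fst p) 0) n) (seq 0 (length (fst p))).

Definition hop_rep (r : list (list C * C)) : list (list C * C) := flat_map hop_rep_term r.

Lemma Csum_hop_rep_term p (Term : list C * C -> C) (G : nat -> C) :
  (forall a k, Term (monomial a k, snd p) = a * G k) ->
  Csum (map Term (hop_rep_term p))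
  = csum (fun n => nth n (fst p) 0 * hop_pattern e (snd p) n G) (length (fst p)).
Proof.
  intros HT. unfold hop_rep_term. rewrite Csum_flat_map, Csum_map_seq.
  apply csum_ext. intros n _. cbn [Nat.add hop_rep_block map].
  rewrite !Csum_cons, Csum_nil, !HT. unfold hop_pattern. ring.
Qed.

Hypothesis He : (e <= 1)%nat.

Lemma hop_Nterm p x : hop (Nterm e p) x = Csum (map (fun q => Nterm e q x) (hop_rep_term p)).
Proof.
  rewrite (Csum_hop_rep_term p _ (fun k => Nblock e (snd p) k x)) by (intros; apply Nterm_monomial).
  rewrite (hop_ext _ _ x (Nterm_csum e p)), hop_csum
    by (intros; apply ex_D2C_scal, ex_D2C_Nblock, He).
  apply csum_ext. intros n _. rewrite hop_scal, hop_Nblock by auto using ex_D2C_Nblock.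
  reflexivity.
Qed.

Lemma hop_Sterm_commutator p x : RtoC 1 + snd p * snd p <> 0 ->
  hop (Sterm e p) x - Csum (map (fun q => Sterm e q x) (hop_rep_term p)) = - Ci * Nterm e p x.
Proof.
  intros Hz.
  rewrite (Csum_hop_rep_term p _ (fun k => Sblock e (snd p) k x)) by (intros; apply Sterm_monomial).
  rewrite (hop_ext _ _ x (Sterm_csum e p)), hop_csum
    by (intros; apply ex_D2C_scal, ex_D2C_Sblock, He).
  rewrite Nterm_csum, <- csum_mult_l, <- csum_minus.
  apply csum_ext. intros n _. rewrite hop_scal by (apply ex_D2C_Sblock, He).
  transitivity (nth n (fst p) 0 * (hop (Sblock e (snd p) n) x
                                  - hop_pattern e (snd p) n (fun k => Sblock e (snd p) k x))); [ring|].
  rewrite hop_Sblock_commutator by assumption. ring.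
Qed.

Lemma Nfun_hop_rep r x : Nfun e (hop_rep r) x = hop (Nfun e r) x.
Proof.
  unfold Nfun, hop_rep. rewrite hop_Csum by (intros; apply ex_D2C_Nterm, He).
  rewrite Csum_flat_map. f_equal. apply map_ext. intros p. symmetry. apply hop_Nterm.
Qed.

Lemma hop_Sfun_commutator_rep r x : (forall p, In p r -> RtoC 1 + snd p * snd p <> 0) ->
  hop (Sfun e r) x - Sfun e (hop_rep r) x = - Ci * Nfun e r x.
Proof.
  intros Hz. unfold Sfun, Nfun, hop_rep.
  rewrite hop_Csum by (intros; apply ex_D2C_Sterm, He).
  rewrite Csum_flat_map.
  induction r as [|p r IH]; cbn [map]; rewrite ?Csum_cons, ?Csum_nil.
  - ring.
  - rewrite Cmult_plus_distr_l, <- (hop_Sterm_commutator p x (Hz p (in_eq p r))), <- IH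
      by (intros; apply Hz, in_cons; assumption).
    ring.
Qed.

End HopRepresentation.

(** * Linear independence of the functions s^n e^(izs/2) *)

Section Grouping.

Context {A : Type} (key : A -> C).

Definition group (val : A -> C) (l : list A) (z : C) : C :=
  Csum (map (fun a => if Ceq_dec (key a) z then val a else 0) l).

Lemma Csum_groups_eq0 (psi : C -> C) : forall N (val : A -> C) l, (length l <= N)%nat ->
  (forall z, group val l z = 0) -> Csum (map (fun a => val a * psi (key a)) l) = 0.
Proof.
  induction N as [|N IH]; intros val [|a0 l] Hl Hg; try reflexivity; [simpl in Hl; lia|].
  set (z0 := key a0).
  set (other a := if Ceq_dec (key a) z0 then false else true).
  assert (Split : Csum (map (fun a => val a * psi (key a)) (a0 :: l))
    = psi z0 * group val (a0 :: l) z0 + Csum (map (fun a => val a * psi (key a)) (filter other (a0 :: l)))).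
  { unfold group. rewrite Csum_map_filter, <- Csum_map_scal, <- Csum_map_plus.
    f_equal. apply map_ext. intros a. unfold other.
    destruct (Ceq_dec (key a) z0) as [->|]; ring. }
  rewrite Split, Hg, IH; [ring | |].
  - cbn [filter]. unfold other at 1. destruct (Ceq_dec (key a0) z0) as [_|Hn]; [|now exfalso].
    pose proof (filter_length_le other l). simpl in Hl. lia.
  - intros z. unfold group. rewrite Csum_map_filter. unfold other.
    destruct (Ceq_dec z z0) as [->|Hz].
    + apply Csum_map_eq0. intros a _. now destruct (Ceq_dec (key a) z0).
    + transitivity (group val (a0 :: l) z); [|apply Hg]. unfold group. f_equal. apply map_ext. intros a.
      destruct (Ceq_dec (key a) z0), (Ceq_dec (key a) z); cbn; congruence.
Qed.

Lemma Csum_one_group (psi : C -> C) (val : A -> C) l z0 :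
  (forall z, z <> z0 -> group val l z = 0) ->
  Csum (map (fun a => val a * psi (key a)) l) = psi z0 * group val l z0.
Proof.
  intros Hg.
  set (val' a := if Ceq_dec (key a) z0 then RtoC 0 else val a).
  assert (Rest : Csum (map (fun a => val' a * psi (key a)) l) = 0).
  { apply (Csum_groups_eq0 psi (length l)); [lia|]. intros z. unfold group, val'.
    destruct (Ceq_dec z z0) as [->|Hz].
    - apply Csum_map_eq0. intros a _. now destruct (Ceq_dec (key a) z0).
    - transitivity (group val l z); [|now apply Hg]. unfold group. f_equal. apply map_ext. intros a.
      destruct (Ceq_dec (key a) z0), (Ceq_dec (key a) z); congruence. }
  unfold group. rewrite <- Csum_map_scal.
  transitivity (Csum (map (fun a => psi z0 * (if Ceq_dec (key a) z0 then val a else 0)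
                                    + val' a * psi (key a)) l)).
  - f_equal. apply map_ext. intros a. unfold val'. destruct (Ceq_dec (key a) z0) as [->|]; ring.
  - rewrite Csum_map_plus, Rest. ring.
Qed.

End Grouping.

Definition rate (z : C) : C := Ci * z * / RtoC 2.

Definition expz (z : C) (s : R) : C := Cexp' (Ci * z * RtoC s / RtoC 2).

Lemma is_derC_expz z s : is_derC (expz z) s (rate z * expz z s).
Proof.
  unfold expz. eapply is_derC_eq.
  - apply is_derC_Cexp'. apply (is_derC_ext (fun t => rate z * RtoC t)); [intros; unfold rate, Cdiv; ring|].
    apply is_derC_scal, is_derC_id.
  - cbv beta. replace (rate z * RtoC s) with (Ci * z * RtoC s / RtoC 2) by (unfold rate, Cdiv; ring).
    ring.
Qed.

Lemma expz_neq0 z s : expz z s <> 0.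
Proof.
  unfold expz, Cexp'. destruct (Ci * z * RtoC s / RtoC 2) as [a b]. simpl. intros H.
  injection H as Hc Hs.
  pose proof (exp_pos a) as Ea. pose proof (sin2_cos2 b) as SC. unfold Rsqr in SC.
  apply Rmult_integral in Hc as [Hc|Hc], Hs as [Hs|Hs]; try lra; nra.
Qed.

Lemma rate_inj z w : rate z = rate w -> z = w.
Proof.
  intros H. unfold rate in H. rewrite <- RtoC_inv in H by lra.
  transitivity (Ci * z * RtoC (/ 2) * (RtoC 2 * - Ci)); [Cfield|].
  rewrite H. Cfield.
Qed.

Lemma is_derC_eq0_on_pos (f : R -> C) s l :
  0 < s -> (forall t, 0 < t -> f t = 0) -> is_derC f s l -> l = 0.
Proof.
  intros Hs Hf D. apply (is_derC_unique f s); [exact D|].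
  eapply is_derC_ext_loc; [|apply (is_derC_const 0)].
  exists (mkposreal s Hs). intros t Ht. symmetry. apply Hf.
  change (Rabs (t - s) < s) in Ht. apply Rabs_def2 in Ht. lra.
Qed.

Definition poly_eval (M : nat) (q : nat -> C) (s : R) : C := csum (fun n => q n * RtoC (s ^ n)) M.

Definition supp_lt (M : nat) (q : nat -> C) : Prop := forall n, (M <= n)%nat -> q n = 0.

Definition coef_deriv (q : nat -> C) (n : nat) : C := RtoC (INR (S n)) * q (S n).

Definition coef_dplus (c : C) (q : nat -> C) (n : nat) : C := coef_deriv q n + c * q n.

Lemma poly_eval_ext M f g s : (forall n, f n = g n) -> poly_eval M f s = poly_eval M g s.
Proof. intros H. apply csum_ext. intros. now rewrite H. Qed.

Lemma poly_eval_plus M f g s : poly_eval M (fun n => f n + g n) s = poly_eval M f s + poly_eval M g s.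
Proof. unfold poly_eval. rewrite <- csum_plus. apply csum_ext. intros. ring. Qed.

Lemma poly_eval_scal M c f s : poly_eval M (fun n => c * f n) s = c * poly_eval M f s.
Proof. unfold poly_eval. rewrite <- csum_mult_l. apply csum_ext. intros. ring. Qed.

Lemma poly_eval_eq0 M (f : nat -> C) s : (forall n, f n = 0) -> poly_eval M f s = 0.
Proof. intros H. apply csum_eq0. intros. rewrite H. ring. Qed.

Lemma is_derC_poly_eval M q s : is_derC (poly_eval (S M) q) s (poly_eval M (coef_deriv q) s).
Proof.
  revert q. induction M as [|M IH]; intros q.
  - eapply is_derC_ext; [|apply (is_derC_const (q O * RtoC 1))]. intros. unfold poly_eval. simpl. ring.
  - apply (is_derC_ext (fun t => poly_eval (S M) q t + q (S M) * RtoC (t ^ S M))); [reflexivity|].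
    eapply is_derC_eq; [apply is_derC_plus; [apply IH | apply is_derC_scal, is_derC_pow]|].
    unfold poly_eval, coef_deriv. simpl. ring.
Qed.

Lemma is_derC_poly_eval_supp M q s :
  supp_lt M q -> is_derC (poly_eval M q) s (poly_eval M (coef_deriv q) s).
Proof.
  intros H. destruct M as [|M].
  - apply is_derC_const.
  - eapply is_derC_eq; [apply is_derC_poly_eval|].
    unfold poly_eval, coef_deriv. simpl. rewrite (H (S M)) by lia. ring.
Qed.

Lemma supp_lt_coef_dplus M c q : supp_lt M q -> supp_lt M (coef_dplus c q).
Proof. intros H n Hn. unfold coef_dplus, coef_deriv. rewrite !H by lia. ring. Qed.

Lemma supp_lt_iter M K c q : supp_lt M q -> supp_lt M (Nat.iter K (coef_dplus c) q).
Proof. intros H. induction K as [|K IH]; simpl; [exact H | now apply supp_lt_coef_dplus]. Qed.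

Lemma coef_eq0_of_poly_eval_eq0 M : forall q, supp_lt M q ->
  (forall s, 0 < s -> poly_eval M q s = 0) -> forall n, q n = 0.
Proof.
  induction M as [|M IH]; intros q Hs Hz.
  - intros n. apply Hs. lia.
  - assert (HD : forall n, coef_deriv q n = 0).
    { apply IH; [intros n Hn; unfold coef_deriv; rewrite Hs by lia; ring|].
      intros s Hs0. exact (is_derC_eq0_on_pos _ s _ Hs0 Hz (is_derC_poly_eval M q s)). }
    assert (HS : forall n, q (S n) = 0)
      by (intros n; exact (Cmult_reg_l _ _ (RtoC_INR_S_neq0 n) (HD n))).
    intros [|n]; [|apply HS].
    pose proof (Hz 1%R Rlt_0_1) as K. unfold poly_eval in K.
    rewrite csum_Sn_l, csum_eq0 in K by (intros k _; rewrite HS; ring).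
    rewrite <- K. simpl. ring.
Qed.

Lemma coef_dplus_inj M (c : C) q : c <> 0 -> supp_lt M q ->
  (forall n, coef_dplus c q n = 0) -> forall n, q n = 0.
Proof.
  intros Hc Hs HT.
  assert (K : forall j n, (M <= n + j)%nat -> q n = 0).
  { induction j as [|j IH]; intros n Hn; [apply Hs; lia|].
    apply (Cmult_reg_l c); [exact Hc|].
    specialize (HT n). unfold coef_dplus, coef_deriv in HT. rewrite (IH (S n)) in HT by lia.
    rewrite <- HT. ring. }
  intros n. apply (K M). lia.
Qed.

Lemma coef_dplus_iter_inj M (c : C) K q : c <> 0 -> supp_lt M q ->
  (forall n, Nat.iter K (coef_dplus c) q n = 0) -> forall n, q n = 0.
Proof.
  intros Hc Hs. induction K as [|K IH]; simpl; [easy|].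
  intros H. apply IH. apply (coef_dplus_inj M c); auto using supp_lt_iter.
Qed.

Lemma coef_dplus_0_iter_vanish M q : supp_lt M q -> forall n, Nat.iter M (coef_dplus 0) q n = 0.
Proof.
  intros H.
  assert (K : forall K, supp_lt (M - K) (Nat.iter K (coef_dplus 0) q)).
  { induction K as [|K IH]; simpl; [now rewrite Nat.sub_0_r|].
    intros n Hn. unfold coef_dplus, coef_deriv. rewrite IH by lia. ring. }
  intros n. apply (K M). lia.
Qed.

Lemma coef_dplus_plus c h f g n :
  (forall m, h m = f m + g m) -> coef_dplus c h n = coef_dplus c f n + coef_dplus c g n.
Proof. intros H. unfold coef_dplus, coef_deriv. rewrite !H. ring. Qed.

Lemma coef_dplus_ext c h h' n : (forall m, h m = h' m) -> coef_dplus c h n = coef_dplus c h' n.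
Proof. intros H. unfold coef_dplus, coef_deriv. now rewrite !H. Qed.

Lemma coef_dplus_iter_ext K c f g n :
  (forall m, f m = g m) -> Nat.iter K (coef_dplus c) f n = Nat.iter K (coef_dplus c) g n.
Proof.
  intros H. revert n. induction K as [|K IH]; intros n; [apply H|]. apply coef_dplus_ext, IH.
Qed.

Lemma coef_dplus_iter_plus K c f g n :
  Nat.iter K (coef_dplus c) (fun m => f m + g m) n
  = Nat.iter K (coef_dplus c) f n + Nat.iter K (coef_dplus c) g n.
Proof.
  revert n. induction K as [|K IH]; intros n; [reflexivity|]. apply coef_dplus_plus, IH.
Qed.

Lemma coef_dplus_iter_zero K c n : Nat.iter K (coef_dplus c) (fun _ => 0) n = 0.
Proof.
  revert n. induction K as [|K IH]; intros n; [reflexivity|].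
  simpl. unfold coef_dplus at 1, coef_deriv. rewrite !IH. ring.
Qed.

Definition expoly (M : nat) (d : list ((nat -> C) * C)) (s : R) : C :=
  Csum (map (fun p => poly_eval M (fst p) s * expz (snd p) s) d).

Definition group_coef (d : list ((nat -> C) * C)) (z : C) (n : nat) : C :=
  group snd (fun p => fst p n) d z.

Definition dshift_rep (K : nat) (b : C) (d : list ((nat -> C) * C)) : list ((nat -> C) * C) :=
  map (fun p => (Nat.iter K (coef_dplus (rate (snd p) - b)) (fst p), snd p)) d.

Lemma group_coef_cons p d z n :
  group_coef (p :: d) z n = (if Ceq_dec (snd p) z then fst p n else 0) + group_coef d z n.
Proof. reflexivity. Qed.

Lemma group_coef_dshift K b d z n :
  group_coef (dshift_rep K b d) z n = Nat.iter K (coef_dplus (rate z - b)) (group_coef d z) n.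
Proof.
  induction d as [|p d IH].
  - symmetry. apply coef_dplus_iter_zero.
  - change (dshift_rep K b (p :: d))
      with ((Nat.iter K (coef_dplus (rate (snd p) - b)) (fst p), snd p) :: dshift_rep K b d).
    rewrite group_coef_cons, IH, (coef_dplus_iter_ext _ _ _ _ _ (group_coef_cons p d z)),
      coef_dplus_iter_plus.
    f_equal. cbn [fst snd]. destruct (Ceq_dec (snd p) z) as [<-|]; [reflexivity|].
    symmetry. apply coef_dplus_iter_zero.
Qed.

Section ExpPoly.

Variable M : nat.

Definition supp_rep (d : list ((nat -> C) * C)) : Prop := forall p, In p d -> supp_lt M (fst p).

Lemma supp_rep_dshift K b d : supp_rep d -> supp_rep (dshift_rep K b d).
Proof.
  intros H p Hp. apply in_map_iff in Hp as [p1 [<- Hp1]]. apply supp_lt_iter, H, Hp1.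
Qed.

Lemma supp_lt_group_coef d z : supp_rep d -> supp_lt M (group_coef d z).
Proof.
  intros H n Hn. apply Csum_map_eq0. intros p Hp. destruct (Ceq_dec (snd p) z); [|reflexivity].
  now apply H.
Qed.

(* (P e^(a s))' = (P' + (a - b) P) e^(a s) + b P e^(a s). *)
Lemma is_derC_expoly d b s : supp_rep d ->
  is_derC (expoly M d) s (expoly M (dshift_rep 1 b d) s + b * expoly M d s).
Proof.
  intros H. induction d as [|p d IH]; unfold expoly in *; cbn [map] in *.
  - eapply is_derC_eq; [apply is_derC_const|]. unfold Csum. simpl. ring.
  - rewrite !Csum_cons.
    eapply is_derC_eq.
    { apply is_derC_plus; [|apply IH; intros q Hq; apply H; now right].
      apply is_derC_mult; [apply is_derC_poly_eval_supp, H; now left | apply is_derC_expz]. }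
    simpl. unfold coef_dplus. rewrite poly_eval_plus, poly_eval_scal. ring.
Qed.

Lemma expoly_dshift_eq0 b d : supp_rep d -> (forall s, 0 < s -> expoly M d s = 0) ->
  forall K s, 0 < s -> expoly M (dshift_rep K b d) s = 0.
Proof.
  intros Hs Hz K. induction K as [|K IH]; intros s Hpos.
  - rewrite <- (Hz s Hpos). unfold expoly, dshift_rep. now rewrite map_map.
  - assert (E : dshift_rep (S K) b d = dshift_rep 1 b (dshift_rep K b d))
      by (unfold dshift_rep; now rewrite map_map).
    pose proof (is_derC_expoly (dshift_rep K b d) b s (supp_rep_dshift K b d Hs)) as D.
    pose proof (is_derC_eq0_on_pos _ s _ Hpos IH D) as Z.
    rewrite (IH s Hpos), Cmult_0_r, Cplus_0_r in Z. now rewrite E.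
Qed.

Lemma expoly_one_group d z0 s : (forall z, z <> z0 -> forall n, group_coef d z n = 0) ->
  expoly M d s = poly_eval M (group_coef d z0) s * expz z0 s.
Proof.
  intros Hg. unfold expoly, poly_eval.
  rewrite (map_ext _ (fun p => csum (fun n => fst p n * (RtoC (s ^ n) * expz (snd p) s)) M))
    by (intros p; rewrite csum_mult_r; apply csum_ext; intros; ring).
  rewrite Csum_csum, csum_mult_r. apply csum_ext. intros n _.
  rewrite (Csum_one_group snd (fun w => RtoC (s ^ n) * expz w s) (fun p => fst p n) d z0)
    by (intros z Hz; apply Hg, Hz).
  unfold group_coef. ring.
Qed.

Lemma group_coef_eq0 : forall N d, (length d <= N)%nat -> supp_rep d ->
  (forall s, 0 < s -> expoly M d s = 0) -> forall z n, group_coef d z n = 0.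
Proof.
  induction N as [|N IH]; intros [|p0 d] Hl Hs Hz; try reflexivity; [simpl in Hl; lia|].
  set (z0 := snd p0).
  assert (Hsd : supp_rep d) by (intros p Hp; apply Hs; now right).
  (* (d/ds - rate z0)^M annihilates the p0-term ... *)
  assert (Hz' : forall s, 0 < s -> expoly M (dshift_rep M (rate z0) d) s = 0).
  { intros s Hpos. rewrite <- (expoly_dshift_eq0 (rate z0) (p0 :: d) Hs Hz M s Hpos).
    unfold expoly, dshift_rep. cbn [map]. rewrite Csum_cons. fold z0.
    replace (rate z0 - rate z0) with (RtoC 0) by ring.
    rewrite (poly_eval_eq0 M (Nat.iter M (coef_dplus 0) (fst p0)));
      [ring | apply coef_dplus_0_iter_vanish, Hs; now left]. }
  (* ... and is injective on the coefficients of every other group. *)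
  assert (Hother : forall z, z <> z0 -> forall n, group_coef d z n = 0).
  { intros z Hne. apply (coef_dplus_iter_inj M (rate z - rate z0) M).
    - intros E. apply Hne, rate_inj, Ceq_minus, E.
    - apply supp_lt_group_coef, Hsd.
    - intros n. rewrite <- group_coef_dshift.
      apply (IH (dshift_rep M (rate z0) d)); [|now apply supp_rep_dshift | exact Hz'].
      unfold dshift_rep. rewrite length_map. simpl in Hl. lia. }
  assert (Hz0 : forall n, group_coef (p0 :: d) z0 n = 0).
  { apply (coef_eq0_of_poly_eval_eq0 M); [now apply supp_lt_group_coef|].
    intros s Hpos. apply (Cmult_reg_l (expz z0 s)); [apply expz_neq0|].
    rewrite <- (Hz s Hpos). unfold expoly. cbn [map]. rewrite Csum_cons.
    change (Csum (map _ d)) with (expoly M d s). rewrite (expoly_one_group d z0 s Hother).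
    rewrite (poly_eval_ext M _ (fun n => fst p0 n + group_coef d z0 n)), poly_eval_plus.
    - fold z0. ring.
    - intros n. rewrite group_coef_cons. fold z0. now destruct (Ceq_dec z0 z0). }
  intros z n. destruct (Ceq_dec z z0) as [->|Hne]; [apply Hz0|].
  rewrite group_coef_cons, (Hother z Hne). fold z0.
  destruct (Ceq_dec z0 z) as [E|_]; [now subst | ring].
Qed.

End ExpPoly.

(** * Well-definedness of S and the commutator *)

Definition rep_opp (r : list (list C * C)) : list (list C * C) :=
  map (fun p => (map Copp (fst p), snd p)) r.

Definition rep_degree (r : list (list C * C)) : nat :=
  fold_right (fun p m => Nat.max (length (fst p)) m) O r.

Lemma rep_degree_ge r p : In p r -> (length (fst p) <= rep_degree r)%nat.
Proof. induction r as [|q r IH]; simpl; [easy|]. intros [->|Hp]; [lia | specialize (IH Hp); lia]. Qed.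

Definition coef_rep (r : list (list C * C)) : list ((nat -> C) * C) :=
  map (fun p => (fun n => nth n (fst p) (RtoC 0), snd p)) r.

Section WellDefined.

Variable e : nat.

Lemma Nfun_app r1 r2 x : Nfun e (r1 ++ r2) x = Nfun e r1 x + Nfun e r2 x.
Proof. unfold Nfun. now rewrite map_app, Csum_app. Qed.

Lemma Sfun_app r1 r2 x : Sfun e (r1 ++ r2) x = Sfun e r1 x + Sfun e r2 x.
Proof. unfold Sfun. now rewrite map_app, Csum_app. Qed.

Lemma Nfun_opp r x : Nfun e (rep_opp r) x = - Nfun e r x.
Proof.
  unfold Nfun, rep_opp. rewrite map_map.
  transitivity (Csum (map (fun p => - RtoC 1 * Nterm e p x) r)); [|rewrite Csum_map_scal; ring].
  f_equal. apply map_ext. intros p. unfold Nterm. simpl. rewrite !peval_lincomb, lincomb_opp. ring.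
Qed.

Lemma Sfun_opp r x : Sfun e (rep_opp r) x = - Sfun e r x.
Proof.
  unfold Sfun, rep_opp. rewrite map_map.
  transitivity (Csum (map (fun p => - RtoC 1 * Sterm e p x) r)); [|rewrite Csum_map_scal; ring].
  f_equal. apply map_ext. intros p. unfold Sterm. simpl. rewrite !rhotL_lincomb, lincomb_opp. ring.
Qed.

Lemma Nfun_expoly r t : Nfun e r t = RtoC (t ^ e) * expoly (rep_degree r) (coef_rep r) (t * t).
Proof.
  unfold Nfun, expoly, coef_rep. rewrite map_map, <- Csum_map_scal.
  f_equal. apply map_ext_in. intros p Hp. cbn [fst snd].
  rewrite Nterm_csum. unfold poly_eval. rewrite (csum_extend _ (length (fst p)) (rep_degree r)).
  - unfold Nblock. rewrite csum_mult_r, <- csum_mult_l. apply csum_ext. intros. unfold xi, expz. ring.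
  - now apply rep_degree_ge.
  - intros n Hn. rewrite nth_overflow by exact Hn. ring.
Qed.

Lemma Sfun_eq0 r : (forall x, Nfun e r x = 0) -> forall x, Sfun e r x = 0.
Proof.
  intros H x. set (M := rep_degree r).
  assert (HE : forall s, 0 < s -> expoly M (coef_rep r) s = 0).
  { intros s Hs. apply (Cmult_reg_l (RtoC (sqrt s ^ e))).
    - intros Z. apply RtoC_inj in Z. apply (pow_nonzero (sqrt s) e); [|exact Z].
      apply Rgt_not_eq, sqrt_lt_R0, Hs.
    - rewrite <- (sqrt_sqrt s) at 2 by lra. unfold M. rewrite <- Nfun_expoly. apply H. }
  assert (Hsupp : supp_rep M (coef_rep r)).
  { intros p Hp. apply in_map_iff in Hp as [p1 [<- Hp1]]. intros n Hn. apply nth_overflow.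
    pose proof (rep_degree_ge r p1 Hp1). unfold M in Hn. simpl. lia. }
  pose proof (group_coef_eq0 M _ _ (le_n _) Hsupp HE) as G.
  (* S f is assembled from the same grouped coefficients, which all vanish. *)
  unfold Sfun.
  rewrite (map_ext_in (fun p => Sterm e p x)
    (fun p => csum (fun n => nth n (fst p) (RtoC 0) * Sblock e (snd p) n x) M) r).
  - rewrite Csum_csum. apply csum_eq0. intros n _.
    apply (Csum_groups_eq0 snd (fun w => Sblock e w n x) (length r)); [lia|].
    intros z. transitivity (group_coef (coef_rep r) z n); [|apply G].
    unfold group_coef, group, coef_rep. now rewrite map_map.
  - intros p Hp. rewrite Sterm_csum. symmetry. apply csum_extend; [now apply rep_degree_ge|].
    intros n Hn. rewrite nth_overflow by exact Hn. ring.
Qed.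

Lemma Sfun_well_defined r1 r2 :
  (forall x, Nfun e r1 x = Nfun e r2 x) -> forall x, Sfun e r1 x = Sfun e r2 x.
Proof.
  intros H x. apply Ceq_minus.
  unfold Cminus. rewrite <- Sfun_opp, <- Sfun_app. apply Sfun_eq0. intros t.
  rewrite Nfun_app, Nfun_opp, H. ring.
Qed.

End WellDefined.

Lemma valid_rep_regular r : valid_rep r -> forall p, In p r -> RtoC 1 + snd p * snd p <> 0.
Proof.
  intros H p Hp. unfold valid_rep in H. rewrite Forall_forall in H. destruct (H p Hp) as [Him Hi].
  destruct p as [rho [a b]]. simpl in *. intros Z. apply Hi.
  injection Z as Z1 Z2. assert (a = 0%R) as -> by nra. assert (b = 1%R) as -> by nra. reflexivity.
Qed.

Lemma hop_Sfun_commutator e r r' x : (e <= 1)%nat -> valid_rep r ->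
  (forall t, Nfun e r' t = hop (Nfun e r) t) -> hop (Sfun e r) x - Sfun e r' x = - Ci * Nfun e r x.
Proof.
  intros He Hr H.
  rewrite (Sfun_well_defined e r' (hop_rep e r)) by (intros t; rewrite H; symmetry; now apply Nfun_hop_rep).
  now apply hop_Sfun_commutator_rep, valid_rep_regular.
Qed.

Lemma N0fun_Nfun r x : N0fun r x = Nfun 0 r x.
Proof. unfold N0fun, Nfun. f_equal. apply map_ext. intros p. unfold Nterm. simpl. ring. Qed.

Lemma N1fun_Nfun r x : N1fun r x = Nfun 1 r x.
Proof.
  unfold N1fun, Nfun. f_equal. apply map_ext. intros p. unfold Nterm. simpl. rewrite Rmult_1_r. ring.
Qed.

Lemma Shat_Sfun r x : Shat r x = Sfun 0 r x.
Proof. unfold Shat, Sfun. f_equal. apply map_ext. intros p. unfold Sterm. simpl. ring. Qed.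

Lemma Shatstar_Sfun r x : Shatstar r x = Sfun 1 r x.
Proof.
  unfold Shatstar, Sfun. f_equal. apply map_ext. intros p. unfold Sterm. simpl. rewrite Rmult_1_r.
  ring.
Qed.

Local Close Scope C_scope.

Theorem lemma4p6 :
  (forall r r' : list (list C * C),
     valid_rep r -> valid_rep r' ->
     (forall x : R, N0fun r' x = hop (N0fun r) x) ->
     forall x : R, (hop (Shat r) x - Shat r' x)%C = (- Ci * N0fun r x)%C)
  /\
  (forall r r' : list (list C * C),
     valid_rep r -> valid_rep r' ->
     (forall x : R, N1fun r' x = hop (N1fun r) x) ->
     forall x : R, (hop (Shatstar r) x - Shatstar r' x)%C = (- Ci * N1fun r x)%C).
Proof.
  split; intros r r' Hr _ H x.
  - rewrite (hop_ext _ _ x (Shat_Sfun r)), Shat_Sfun, N0fun_Nfun.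
    apply hop_Sfun_commutator; [lia | exact Hr |].
    intros t. rewrite <- N0fun_Nfun, H. apply hop_ext, N0fun_Nfun.
  - rewrite (hop_ext _ _ x (Shatstar_Sfun r)), Shatstar_Sfun, N1fun_Nfun.
    apply hop_Sfun_commutator; [lia | exact Hr |].
    intros t. rewrite <- N1fun_Nfun, H. apply hop_ext, N1fun_Nfun.
Qed.
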